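(* Let $A$ be a simplicial space, $x\in A_n$ a non-degenerate simplex, $N\ge n$, and $(U_\sigma)_{\sigma:[N]\twoheadrightarrow[n]}$ an $x$-admissible family, extended to all epimorphisms $\sigma:[k]\twoheadrightarrow[n]$ with $k\le N$ by $U_\sigma:=\bigcap_{\tau:[N]\twoheadrightarrow[k]}(\tau^* )^{-1}(U_{\sigma\circ\tau})$. For an epimorphism $\sigma:[k]\twoheadrightarrow[n]$ (any $k\in\mathbb{N}$) let $I_\sigma$ be the set of monomorphisms $\delta:[k']\hookrightarrow[k]$ in $\Delta$ with $k'\le N$ and $\sigma\circ\delta$ an epimorphism, and set $U(\sigma):=\bigcap_{\delta\in I_\sigma}(\delta^* )^{-1}(U_{\sigma\circ\delta})\subset A_k$. Then, for every epimorphism $\sigma:[k]\twoheadrightarrow[n]$: (a) $U(\sigma)$ is an open neighborhood of $\sigma^*(x)$ in $A_k$; (b) $U(\sigma)\subset U_\sigma$ whenever $k\le N$; (c) for every monomorphism $\delta:[i]\hookrightarrow[k]$ such that $\sigma\circ\delta$ is onto, $\delta^*(U(\sigma))\subset U(\sigma\circ\delta)$; (d) for every epimorphism $\tau:[k']\twoheadrightarrow[k]$, $\tau^*(U(\sigma))\subset U(\sigma\circ\tau)$; (e) for every epimorphism $\tau:[k]\twoheadrightarrow[k']$, $\tau^*(A_{k'})\cap U(\sigma)\ne\emptyset$ if and only if there exists an epimorphism $\rho:[k']\twoheadrightarrow[n]$ with $\sigma=\rho\circ\tau$.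
   Context: $\Delta$ is the simplicial category with objects $[n]=\{0,\dots,n\}$ and non-decreasing maps as morphisms. A simplicial space is a contravariant functor $A:\Delta\to\mathrm{Top}$, with $A_n:=A([n])$ and $\delta^*:=A(\delta)$. A point of $A_n$ is degenerate if it lies in the image of a degeneracy map $A(\sigma_i^n)$, where $\sigma_i^n:[n]\to[n-1]$ sends $j\le i$ to $j$ and $j>i$ to $j-1$. For $N\ge n$ and non-degenerate $x\in A_n$, a family $(U_\sigma)_{\sigma:[N]\twoheadrightarrow[n]}$ indexed by the epimorphisms $[N]\twoheadrightarrow[n]$ is called $x$-admissible when (i) each $U_\sigma$ is an open neighborhood of $\sigma^*(x)$ in $A_N$, and (ii) for every epimorphism $\sigma:[N]\twoheadrightarrow[n]$ and every epimorphism $\tau:[N]\twoheadrightarrow[m]$, $U_\sigma\cap\tau^*(A_m)\ne\emptyset$ holds if and only if there exists an epimorphism $\rho:[m]\twoheadrightarrow[n]$ with $\sigma=\rho\circ\tau$. *)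

From HB Require Import structures.
From mathcomp Require Import all_boot all_order.
From mathcomp Require Import boolp classical_sets topology.
From mathcomp Require Import zify.

Set Implicit Arguments.
Unset Strict Implicit.
Unset Printing Implicit Defensive.

Local Open Scope classical_set_scope.

(* A morphism [m] -> [n] of Delta, with [m] = {0,..,m} = 'I_m.+1,
   is a non-decreasing map 'I_m.+1 -> 'I_n.+1. *)
Definition nondecr (m n : nat) (f : {ffun 'I_m.+1 -> 'I_n.+1}) : bool :=
  [forall i : 'I_m.+1, forall j : 'I_m.+1, (i <= j)%N ==> (f i <= f j)%N].

Definition Dhom (m n : nat) := {f : {ffun 'I_m.+1 -> 'I_n.+1} | nondecr f}.

Definition dfun m n (f : Dhom m n) : 'I_m.+1 -> 'I_n.+1 := fun i => proj1_sig f i.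

Lemma nondecr_comp m n p (g : Dhom n p) (f : Dhom m n) :
  nondecr [ffun i => dfun g (dfun f i)].
Proof.
case: g => g Hg; case: f => f Hf.
apply/forallP => i; apply/forallP => j; apply/implyP => ij.
rewrite /dfun /= !ffunE.
have fij : (f i <= f j)%N by move: Hf => /forallP /(_ i) /forallP /(_ j) /implyP; apply.
by move: Hg => /forallP /(_ (f i)) /forallP /(_ (f j)) /implyP; apply.
Qed.

Definition dcomp m n p (g : Dhom n p) (f : Dhom m n) : Dhom m p :=
  exist _ [ffun i => dfun g (dfun f i)] (nondecr_comp g f).

Lemma nondecr_id n : nondecr [ffun i : 'I_n.+1 => i].
Proof.
by apply/forallP => i; apply/forallP => j; apply/implyP => ij; rewrite !ffunE.
Qed.

Definition did n : Dhom n n := exist _ [ffun i => i] (nondecr_id n).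

Definition epi m n (f : Dhom m n) : bool := [forall j, exists i, dfun f i == j].
Definition mono m n (f : Dhom m n) : bool := injectiveb (dfun f).

(* codegeneracy sigma_i^n : [n] -> [n-1], here n = k.+1, i in {0,..,k}:
   j <= i |-> j, j > i |-> j - 1 *)
Definition degen_fun k (i : 'I_k.+1) : {ffun 'I_k.+2 -> 'I_k.+1} :=
  [ffun j : 'I_k.+2 => inord (if (j <= i)%N then (j : nat) else j.-1)].

Lemma nondecr_degen k (i : 'I_k.+1) : nondecr (degen_fun i).
Proof.
apply/forallP => a; apply/forallP => b; apply/implyP => ab.
rewrite !ffunE.
have ha : ((if (a <= i)%N then (a : nat) else a.-1) < k.+1)%N.
  case: ifP => H; first exact: leq_ltn_trans H (ltn_ord i).
  by have := ltn_ord a; case: (nat_of_ord a) => //.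
have hb : ((if (b <= i)%N then (b : nat) else b.-1) < k.+1)%N.
  case: ifP => H; first exact: leq_ltn_trans H (ltn_ord i).
  by have := ltn_ord b; case: (nat_of_ord b) => //.
rewrite !inordK //.
move: ab ha hb; case: ifP; case: ifP => /=; lia.
Qed.

Definition degen k (i : 'I_k.+1) : Dhom k.+1 k := exist _ (degen_fun i) (nondecr_degen i).

Record sspace := SSpace {
  sp : nat -> topologicalType;
  (* act f = f^* = A(f) : A_n -> A_m  for f : [m] -> [n] *)
  act : forall m n, Dhom m n -> sp n -> sp m;
  act_cont : forall m n (f : Dhom m n), continuous (act f);
  act_id : forall n (x : sp n), act (did n) x = x;
  act_comp : forall m n p (g : Dhom n p) (f : Dhom m n) (x : sp p),
      act (dcomp g f) x = act f (act g x)
}.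

Arguments sp : clear implicits.
Arguments act A {m n} f _ : rename.

Definition degenerate (A : sspace) (n : nat) : sp A n -> Prop :=
  match n with
  | 0 => fun _ => False
  | k.+1 => fun x => exists (i : 'I_k.+1) (y : sp A k), x = act A (degen i) y
  end.

Definition admissible (A : sspace) (n : nat) (x : sp A n) (N : nat)
    (U : Dhom N n -> set (sp A N)) : Prop :=
  (forall sigma : Dhom N n, epi sigma ->
      open (U sigma) /\ U sigma (act A sigma x)) /\
  (forall (sigma : Dhom N n), epi sigma ->
   forall m (tau : Dhom N m), epi tau ->
      (U sigma `&` range (act A tau) !=set0 <->
       exists rho : Dhom m n, epi rho /\ sigma = dcomp rho tau)).

Definition Uext (A : sspace) (n N : nat) (U : Dhom N n -> set (sp A N))
    (k : nat) (sigma : Dhom k n) : set (sp A k) :=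
  [set y | forall tau : Dhom N k, epi tau -> U (dcomp sigma tau) (act A tau y)].

Definition Ubig (A : sspace) (n N : nat) (U : Dhom N n -> set (sp A N))
    (k : nat) (sigma : Dhom k n) : set (sp A k) :=
  [set y | forall k' (delta : Dhom k' k), (k' <= N)%N -> mono delta ->
      epi (dcomp sigma delta) -> Uext U (dcomp sigma delta) (act A delta y)].

From HB Require Import structures.
From mathcomp Require Import all_boot all_order.
From mathcomp Require Import boolp classical_sets topology.
From mathcomp Require Import zify.

Set Implicit Arguments.
Unset Strict Implicit.
Unset Printing Implicit Defensive.

Local Open Scope classical_set_scope.

(* Parts (a)-(d) are formal: U(sigma) is a finite intersection of preimages of
   open sets under continuous maps, and since every map of Delta factors as an
   epimorphism followed by a monomorphism, the condition defining U(sigma) holds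
   for all maps [k'] -> [k] with k' <= N, not only for monomorphisms.
   For (e) the key point is that U_id contains no degenerate simplex: by
   admissibility, the retraction [N] ->> [n] fixing 0, .., n cannot factor
   through a degeneracy. If tau^* z lies in U(sigma) and tau a = tau b but
   sigma a <> sigma b, pulling back along a section d of sigma through a and b
   gives the degenerate simplex (tau d)^* z in U_id. Hence sigma is constant on
   the fibres of tau and factors through it. *)

Lemma dfun_comp m n p (g : Dhom n p) (f : Dhom m n) i :
  dfun (dcomp g f) i = dfun g (dfun f i).
Proof. by rewrite /dfun /= ffunE. Qed.

Lemma dfun_did n i : dfun (did n) i = i.
Proof. by rewrite /dfun /= ffunE. Qed.

Lemma dhom_eq m n (f g : Dhom m n) : dfun f =1 dfun g -> f = g.
Proof. by move=> fg; apply: val_inj; apply/ffunP. Qed.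

Lemma dcompA m n p q (h : Dhom p q) (g : Dhom n p) (f : Dhom m n) :
  dcomp h (dcomp g f) = dcomp (dcomp h g) f.
Proof. by apply: dhom_eq => i; rewrite !dfun_comp. Qed.

Lemma dcomp_didr m n (f : Dhom m n) : dcomp f (did m) = f.
Proof. by apply: dhom_eq => i; rewrite dfun_comp dfun_did. Qed.

Lemma dcomp_didl m n (f : Dhom m n) : dcomp (did n) f = f.
Proof. by apply: dhom_eq => i; rewrite dfun_comp dfun_did. Qed.

Lemma dfun_le m n (f : Dhom m n) (i j : 'I_m.+1) :
  (i <= j)%N -> (dfun f i <= dfun f j)%N.
Proof.
case: f => f f_nondecr ij; rewrite /dfun /=.
by move: f_nondecr => /forallP /(_ i) /forallP /(_ j) /implyP; apply.
Qed.

Lemma epiP m n (f : Dhom m n) : reflect (forall j, exists i, dfun f i = j) (epi f).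
Proof.
apply: (iffP forallP) => [fonto j | fonto j].
  by have /existsP [i /eqP fij] := fonto j; exists i.
by have [i fij] := fonto j; apply/existsP; exists i; rewrite fij.
Qed.

Lemma epi_did n : epi (did n).
Proof. by apply/epiP => j; exists j; rewrite dfun_did. Qed.

Lemma epi_comp m n p (g : Dhom n p) (f : Dhom m n) :
  epi g -> epi f -> epi (dcomp g f).
Proof.
move=> /epiP gonto /epiP fonto; apply/epiP => j.
have [i <-] := gonto j; have [i' <-] := fonto i.
by exists i'; rewrite dfun_comp.
Qed.

Lemma epi_compl m n p (g : Dhom n p) (f : Dhom m n) : epi (dcomp g f) -> epi g.
Proof.
move=> /epiP gfonto; apply/epiP => j; have [i <-] := gfonto j.
by exists (dfun f i); rewrite dfun_comp.
Qed.

Lemma mono_did n : mono (did n).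
Proof. by apply/injectiveP => i j; rewrite !dfun_did. Qed.

Lemma mono_compr m n p (g : Dhom n p) (f : Dhom m n) : mono (dcomp g f) -> mono f.
Proof.
by move=> /injectiveP gf_inj; apply/injectiveP => i j fij; apply: gf_inj; rewrite !dfun_comp fij.
Qed.

Section DhomOf.
Variables (m n : nat) (h : 'I_m.+1 -> 'I_n.+1).
Hypothesis h_le : forall i j : 'I_m.+1, (i <= j)%N -> (h i <= h j)%N.

Lemma nondecr_of : nondecr [ffun i => h i].
Proof.
by apply/forallP => i; apply/forallP => j; apply/implyP => ij; rewrite !ffunE h_le.
Qed.

Definition dhom_of : Dhom m n := exist _ [ffun i => h i] nondecr_of.

Lemma dfun_dhom_of i : dfun dhom_of i = h i.
Proof. by rewrite /dfun /= ffunE. Qed.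

End DhomOf.

Lemma exists_retraction N n : (n <= N)%N ->
  exists t : Dhom N n, epi t /\ forall i : 'I_N.+1, (i <= n)%N -> dfun t i = i :> nat.
Proof.
move=> nN; pose h (i : 'I_N.+1) : 'I_n.+1 := inord (minn i n).
have hE i : nat_of_ord (h i) = minn i n by rewrite /h inordK // ltnS geq_minr.
have h_le (i j : 'I_N.+1) : (i <= j)%N -> (h i <= h j)%N by rewrite !hE; lia.
exists (dhom_of h_le); split => [|i iN]; last by rewrite dfun_dhom_of hE; lia.
apply/epiP => j; have jN : (j < N.+1)%N by have := ltn_ord j; lia.
exists (Ordinal jN); apply: ord_inj; rewrite dfun_dhom_of hE /=.
by have := ltn_ord j; lia.
Qed.

Lemma dfun_degen k (p : 'I_k.+1) (j : 'I_k.+2) :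
  dfun (degen p) j = (if (j <= p)%N then (j : nat) else j.-1) :> nat.
Proof.
rewrite /dfun /= ffunE inordK //.
by case: ifP => jp; have := ltn_ord p; have := ltn_ord j; lia.
Qed.

Lemma epi_degen k (p : 'I_k.+1) : epi (degen p).
Proof.
apply/epiP => j; case: (leqP j p) => jp.
  by exists (widen_ord (leqnSn _) j); apply: ord_inj; rewrite dfun_degen /= jp.
have j1 : (j.+1 < k.+2)%N by rewrite ltnS.
exists (Ordinal j1); apply: ord_inj; rewrite dfun_degen /=.
by rewrite leqNgt (ltn_trans jp (ltnSn _)).
Qed.

Lemma factor_degen m k (g : Dhom m.+1 k) (p : 'I_m.+1) :
  (forall a b : 'I_m.+2, a = p :> nat -> b = p.+1 :> nat -> dfun g a = dfun g b) ->
  exists g' : Dhom m k, g = dcomp g' (degen p).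
Proof.
move=> gp.
pose s (v : 'I_m.+1) : 'I_m.+2 := inord (if (v <= p)%N then (v : nat) else v.+1).
have sE v : nat_of_ord (s v) = if (v <= p)%N then (v : nat) else v.+1.
  by rewrite /s inordK //; case: ifP => _; have := ltn_ord v; lia.
have gs_le (v w : 'I_m.+1) : (v <= w)%N -> (dfun g (s v) <= dfun g (s w))%N.
  by move=> vw; apply: dfun_le; rewrite !sE; case: ifP; case: ifP; lia.
exists (dhom_of gs_le); apply: dhom_eq => j; rewrite dfun_comp dfun_dhom_of.
have := dfun_degen p j; have := sE (dfun (degen p) j).
case: (ltngtP j p.+1) => jp sdj dj.
- by congr (dfun g _); apply: ord_inj; rewrite sdj dj; case: ifP; case: ifP; lia.
- by congr (dfun g _); apply: ord_inj; rewrite sdj dj; case: ifP; case: ifP; lia.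
- by apply: esym; apply: gp => //; rewrite sdj dj; case: ifP; case: ifP; lia.
Qed.

Lemma nonmono_factor_degen m k (g : Dhom m.+1 k) :
  ~~ mono g -> exists (p : 'I_m.+1) (g' : Dhom m k), g = dcomp g' (degen p).
Proof.
case/injectivePn => a [b ab gab].
wlog lt_ab : a b ab gab / (a < b)%N.
  move=> W; case: (ltngtP a b) => [|ba|/ord_inj abE]; first exact: W.
    by apply: (W b a); rewrite // eq_sym.
  by rewrite abE eqxx in ab.
have ap : (a < m.+1)%N by have := ltn_ord b; lia.
exists (Ordinal ap); apply: factor_degen => c d /= ca db.
(* [g c <= g d <= g b = g a = g c] since [c = a < d <= b] *)
apply: ord_inj; apply/eqP; rewrite eqn_leq dfun_le ?ca ?db //=.
have -> : dfun g c = dfun g a by congr (dfun g _); apply: ord_inj.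
by rewrite gab dfun_le // db.
Qed.

Lemma epi_mono_factor m k (g : Dhom m k) :
  exists j (e : Dhom m j) (d : Dhom j k), [/\ (j <= m)%N, epi e, mono d & g = dcomp d e].
Proof.
elim: m k g => [|m IH] k g.
  exists 0, (did 0), g; rewrite dcomp_didr epi_did; split => //.
  by apply/injectiveP => a b _; rewrite !ord1.
have [mono_g | /nonmono_factor_degen [p [g' ->]]] := boolP (mono g).
  by exists m.+1, (did _), g; rewrite dcomp_didr epi_did.
have [j [e [d [jm ee md ->]]]] := IH k g'.
exists j, (dcomp e (degen p)), d; split => //.
- exact: leqW.
- by rewrite epi_comp // epi_degen.
- by rewrite dcompA.
Qed.

Lemma epi_section m n (f : Dhom m n) (a b : 'I_m.+1) : epi f ->
  (dfun f a = dfun f b -> a = b) ->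
  exists d : Dhom n m, [/\ dcomp f d = did n, dfun d (dfun f a) = a & dfun d (dfun f b) = b].
Proof.
move=> /epiP fonto fab.
pose c v := if v == dfun f a then a else if v == dfun f b then b
            else odflt a [pick i | dfun f i == v].
have fc v : dfun f (c v) = v.
  rewrite /c; case: eqP => [->//|_]; case: eqP => [->//|_].
  case: pickP => [i /eqP //|nopre].
  by have [i fi] := fonto v; move: (nopre i); rewrite fi eqxx.
(* any section of a nondecreasing map is nondecreasing *)
have c_le (v w : 'I_n.+1) : (v <= w)%N -> (c v <= c w)%N.
  move=> vw; rewrite leqNgt; apply/negP => cwv.
  have := dfun_le f (ltnW cwv); rewrite !fc => wv.
  have vw_eq : v = w by apply: ord_inj; lia.
  by rewrite vw_eq ltnn in cwv.
exists (dhom_of c_le); split.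
- by apply: dhom_eq => v; rewrite dfun_comp dfun_dhom_of fc dfun_did.
- by rewrite dfun_dhom_of /c eqxx.
- rewrite dfun_dhom_of /c eqxx; case: eqP => // fba.
  by rewrite fab.
Qed.

Lemma factor_through_epi k k' n (sigma : Dhom k n) (tau : Dhom k k') : epi tau ->
  (forall a b, dfun tau a = dfun tau b -> dfun sigma a = dfun sigma b) ->
  exists rho : Dhom k' n, sigma = dcomp rho tau.
Proof.
move=> etau tau_fibers.
have [d [taudE _ _]] := epi_section (a := ord0) (b := ord0) etau (fun _ => erefl).
exists (dcomp sigma d); apply: dhom_eq => a; rewrite !dfun_comp.
apply: tau_fibers; have := congr1 (fun f => dfun f (dfun tau a)) taudE.
by rewrite dfun_comp dfun_did.
Qed.

Lemma act_nonmono_degenerate (A : sspace) m k (g : Dhom m k) (w : sp A k) :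
  ~~ mono g -> degenerate (act A g w).
Proof.
case: m g => [|m] g.
  by move/injectivePn => [a [b ab _]]; rewrite !ord1 eqxx in ab.
move=> /nonmono_factor_degen [p [g' ->]].
by exists p, (act A g' w); rewrite act_comp.
Qed.

Lemma open_bigcap_finite (X : topologicalType) (T : finType) (D : set T)
    (F : T -> set X) :
  (forall t, D t -> open (F t)) -> open (\bigcap_(t in D) F t).
Proof.
move=> oF.
have -> : \bigcap_(t in D) F t = \big[setI/setT]_(t <- enum T | `[< D t >]) F t.
  rewrite -bigcap_seq_cond; congr bigcap; apply/seteqP.
  by split => t /=; rewrite mem_enum /= asboolE.
by apply: big_ind => [|U V|t /asboolP Dt]; [exact: openT|exact: openI|exact: oF].
Qed.

Lemma open_preimage_act (A : sspace) m n (f : Dhom m n) (V : set (sp A m)) :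
  open V -> open (act A f @^-1` V).
Proof. by move=> oV; move/continuousP: (@act_cont A _ _ f); apply. Qed.

Section Admissible.
Variables (A : sspace) (n : nat) (x : sp A n) (N : nat) (U : Dhom N n -> set (sp A N)).
Hypothesis nN : (n <= N)%N.
Hypothesis adm : admissible x U.

Lemma Uext_act_epi j m (rho : Dhom j n) (e : Dhom m j) z :
  epi e -> Uext U rho z -> Uext U (dcomp rho e) (act A e z).
Proof.
by move=> ee Uz t et; rewrite -act_comp -dcompA; apply: Uz; rewrite epi_comp.
Qed.

Lemma Ubig_Uext k (sigma : Dhom k n) y : Ubig U sigma y ->
  forall m (f : Dhom m k), (m <= N)%N -> epi (dcomp sigma f) ->
  Uext U (dcomp sigma f) (act A f y).
Proof.
move=> Uy m f mN esf; have [j [e [d [jm ee md fE]]]] := epi_mono_factor f.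
rewrite fE act_comp dcompA; apply: Uext_act_epi => //.
apply: Uy => //; first exact: leq_trans jm mN.
by apply: (@epi_compl _ _ _ _ e); rewrite -dcompA -fE.
Qed.

Lemma Ubig_act k m (sigma : Dhom k n) (f : Dhom m k) y :
  Ubig U sigma y -> Ubig U (dcomp sigma f) (act A f y).
Proof.
move=> Uy k' d k'N _ esfd; rewrite -act_comp -dcompA.
by apply: (Ubig_Uext Uy) => //; rewrite dcompA.
Qed.

Lemma Ubig_act_x k (sigma : Dhom k n) : epi sigma -> Ubig U sigma (act A sigma x).
Proof.
move=> es k' d _ _ esd t et; rewrite -!act_comp dcompA.
by apply: (adm.1 _ _).2; rewrite epi_comp.
Qed.

Lemma open_Uext j (rho : Dhom j n) : epi rho -> open (Uext U rho).
Proof.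
move=> erho.
have -> : Uext U rho = \bigcap_(t in [set t | epi t]) act A t @^-1` U (dcomp rho t) by [].
apply: open_bigcap_finite => t et; apply: open_preimage_act.
by apply: (adm.1 _ _).1; rewrite epi_comp.
Qed.

Lemma open_Ubig k (sigma : Dhom k n) : open (Ubig U sigma).
Proof.
have -> : Ubig U sigma =
    \bigcap_(t : 'I_N.+1) \bigcap_(d in [set d : Dhom t k | mono d /\ epi (dcomp sigma d)])
      act A d @^-1` Uext U (dcomp sigma d).
  apply/seteqP; split => y /= Uy.
    by move=> t _ d [md esd]; apply: Uy => //; rewrite -ltnS.
  move=> k' d k'N md esd; have k'N1 : (k' < N.+1)%N by rewrite ltnS.
  exact: (Uy (Ordinal k'N1) I d).
apply: open_bigcap_finite => t _; apply: open_bigcap_finite => d [_ esd].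
by apply: open_preimage_act; apply: open_Uext.
Qed.

Lemma Uext_did_nondegenerate y : Uext U (did n) y -> ~ degenerate y.
Proof.
move: y; case: n x U nN adm => [|m] ? ? mN adm' y Uy //= [p [w yE]].
have [t [et tE]] := exists_retraction mN.
have [rho [_ tE']] : exists rho : Dhom m m.+1, epi rho /\ t = dcomp rho (dcomp (degen p) t).
  apply: (adm'.2 t et m _ (epi_comp (epi_degen p) et)).1.
  exists (act A t y); split; first by have := Uy t et; rewrite dcomp_didl.
  by exists w; rewrite // act_comp yE.
(* [t] fixes [p] and [p + 1] while [degen p] identifies them *)
have [q0 q0E] : exists q0 : 'I_N.+1, q0 = p :> nat.
  by exists (inord p); rewrite inordK //; have := ltn_ord p; lia.
have [q1 q1E] : exists q1 : 'I_N.+1, q1 = p.+1 :> nat.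
  by exists (inord p.+1); rewrite inordK //; have := ltn_ord p; lia.
have tq0 : dfun t q0 = p :> nat by rewrite tE; have := ltn_ord p; lia.
have tq1 : dfun t q1 = p.+1 :> nat by rewrite tE; have := ltn_ord p; lia.
have degen_q : dfun (degen p) (dfun t q0) = dfun (degen p) (dfun t q1).
  by apply: ord_inj; rewrite !dfun_degen tq0 tq1 leqnn ltnn.
have : dfun t q0 = dfun t q1 by rewrite tE' !dfun_comp degen_q.
by move/(congr1 (@nat_of_ord _)); rewrite tq0 tq1; lia.
Qed.

Lemma Ubig_act_fibers k k' (sigma : Dhom k n) (tau : Dhom k k') z (a b : 'I_k.+1) :
  epi sigma -> Ubig U sigma (act A tau z) ->
  dfun tau a = dfun tau b -> dfun sigma a = dfun sigma b.
Proof.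
move=> es Uz tab; apply: contrapT => sab.
have [d [sdE da db]] := epi_section es (fun e => False_ind _ (sab e)).
have md : mono d by apply: (@mono_compr _ _ _ sigma); rewrite sdE mono_did.
have := Uz n d nN md; rewrite sdE -act_comp => /(_ (epi_did n)).
move/Uext_did_nondegenerate; apply; apply: act_nonmono_degenerate.
apply/injectivePn; exists (dfun sigma a), (dfun sigma b); first exact/eqP.
by rewrite !dfun_comp da db.
Qed.

End Admissible.

Theorem proposition2p3 (A : sspace) (n : nat) (x : sp A n) :
  ~ degenerate x ->
  forall (N : nat), (n <= N)%N ->
  forall (U : Dhom N n -> set (sp A N)), admissible x U ->
  forall (k : nat) (sigma : Dhom k n), epi sigma ->
  (* (a) *)
  (open (Ubig U sigma) /\ Ubig U sigma (act A sigma x)) /\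
  (* (b) *)
  ((k <= N)%N -> Ubig U sigma `<=` Uext U sigma) /\
  (* (c) *)
  (forall (i : nat) (delta : Dhom i k), mono delta -> epi (dcomp sigma delta) ->
      act A delta @` Ubig U sigma `<=` Ubig U (dcomp sigma delta)) /\
  (* (d) *)
  (forall (k' : nat) (tau : Dhom k' k), epi tau ->
      act A tau @` Ubig U sigma `<=` Ubig U (dcomp sigma tau)) /\
  (* (e) *)
  (forall (k' : nat) (tau : Dhom k k'), epi tau ->
      (range (act A tau) `&` Ubig U sigma !=set0 <->
       exists rho : Dhom k' n, epi rho /\ sigma = dcomp rho tau)).
Proof.
move=> _ N nN U adm k sigma es.
split; first by split; [exact: (open_Ubig adm sigma) | exact: (Ubig_act_x adm es)].
split.
  move=> kN y /Ubig_Uext /(_ k (did k) kN).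
  by rewrite dcomp_didr act_id; apply.
split; first by move=> i d _ _ _ [y Uy <-]; apply: Ubig_act.
split; first by move=> k' t _ _ [y Uy <-]; apply: Ubig_act.
move=> k' t et; split.
  move=> [_ [[z _ <-] Uz]].
  have [rho sE] := factor_through_epi et (fun a b => Ubig_act_fibers nN adm es Uz).
  by exists rho; split => //; apply: (@epi_compl _ _ _ _ t); rewrite -sE.
move=> [rho [_ sE]]; exists (act A sigma x); split; last exact: (Ubig_act_x adm es).
by exists (act A rho x) => //; rewrite sE act_comp.
Qed.
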